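(* Let $q=3$. Under $G_3$ there are exactly $4$ plane orbits and $4$ point orbits, namely: planes: $\mathcal N_1=\{\Gamma\text{-planes}\}\cup\{\overline{1_{\mathscr C}}\text{-planes}\}$ of size $4+12=16$; $\mathcal N_2=\{2_{\mathscr C}\text{-planes}\}$ of size $12$; $\mathcal N_3=\{3_{\mathscr C}\text{-planes}\}$ of size $4$; $\mathcal N_4=\{0_{\mathscr C}\text{-planes}\}$ of size $8$; points: $\mathcal M_1=\{\mathscr C\text{-points}\}$ of size $4$; $\mathcal M_2=\{4_\Gamma\text{-points}\}\cup\{\text{IC-points}\}$ of size $4+12=16$; $\mathcal M_3=\{\text{TO-points}\}$ of size $8$; $\mathcal M_4=\{\text{RC-points}\}$ of size $12$.
   Context: Notation. $\mathbb F_q$ is the field with $q$ elements, $\mathbb F_q^+=\mathbb F_q\cup\{\infty\}$. Points of $\mathrm{PG}(3,q)$ are written $\mathbf P(x_0,x_1,x_2,x_3)$ with $x$ a nonzero row vector up to scalars; $\boldsymbol\pi(c_0,c_1,c_2,c_3)$ is the plane $c_0x_0+c_1x_1+c_2x_2+c_3x_3=0$. Put $P(t)=\mathbf P(t^3,t^2,t,1)$ for $t\in\mathbb F_q$, $P(\infty)=\mathbf P(1,0,0,0)$, and $\mathscr C=\{P(t):t\in\mathbb F_q^+\}$ (the twisted cubic). The osculating planes are $\pi_{\rm osc}(t)=\boldsymbol\pi(1,-3t,3t^2,-t^3)$ ($t\in\mathbb F_q$) and $\pi_{\rm osc}(\infty)=\boldsymbol\pi(0,0,0,1)$; these $q+1$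 planes are called $\Gamma$-planes. The tangent at $P(t)$, $t\in\mathbb F_q$, is the line through $P(t)$ and $\mathbf P(3t^2,2t,1,0)$; the tangent at $P(\infty)$ is the line through $\mathbf P(1,0,0,0)$ and $\mathbf P(0,1,0,0)$. A real chord is a line through two distinct points of $\mathscr C$. For $\alpha\in\mathbb F_{q^2}\setminus\mathbb F_q$, the line of $\mathrm{PG}(3,q^2)$ through $P(\alpha),P(\alpha^q)$ is defined over $\mathbb F_q$, and the corresponding line of $\mathrm{PG}(3,q)$ is an imaginary chord. $G_q$ is the group of all projectivities of $\mathrm{PG}(3,q)$ mapping $\mathscr C$ onto itself. Plane types: $\Gamma$-plane = osculating plane; $\overline{1_{\mathscr C}}$-plane = non-osculating plane meeting $\mathscr C$ in exactly one point; $d_{\mathscr C}$-plane ($d\in\{0,2,3\}$) = plane meeting $\mathscr C$ in exactly $d$ points. For $q=3$ all four $\Gamma$-planes contain the line $\mathcal A:\ x_0=x_3=0$. Point types for $q=3$: $\mathscr C$-point = point of $\mathscr C$; $4_\Gamma$-point = point of $\mathcal A$; TO-point = point not in $\mathscr C\cup\mathcal A$ lying on a tangent; RC-point = point not in $\mathscr C\cup\mathcal A$, on no tangent, lying on a real chord; IC-point = any point of none of the previous types (such points lie on imaginary chords). *)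

(* PG(3,3) modelled via F_3^4: points = 1-dim subspaces,
   planes = 3-dim subspaces, both as sets of row vectors. *)
From mathcomp Require Import all_boot all_order all_algebra.
Set Implicit Arguments. Unset Strict Implicit. Unset Printing Implicit Defensive.
Import GRing.Theory.
Local Open Scope ring_scope.

Notation F := 'F_3.
Notation vec := 'rV[F]_4.

Definition coord (x : vec) (i : nat) : F := x ord0 (inord i).

Definition mkv (a b c d : F) : vec := \row_(i < 4) nth 0 [:: a; b; c; d] i.

Definition span1 (v : vec) : {set vec} := [set k *: v | k : F].
Definition span2 (u w : vec) : {set vec} := [set a *: u + b *: w | a : F, b : F].
Definition hyp (c : vec) : {set vec} :=
  [set x : vec | \sum_(i < 4) c ord0 i * x ord0 i == 0].

Definition points : {set {set vec}} := [set span1 v | v in [set v : vec | v != 0]].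
Definition planes : {set {set vec}} := [set hyp c | c in [set c : vec | c != 0]].

(* t in F_q^+ is modelled as option F, None = infinity *)
Definition cvec (t : option F) : vec :=
  if t is Some s then mkv (s ^+ 3) (s ^+ 2) s 1 else mkv 1 0 0 0.
Definition cpt (t : option F) : {set vec} := span1 (cvec t).
Definition Ccurve : {set {set vec}} := [set cpt t | t : option F].

Definition osc (t : option F) : {set vec} :=
  if t is Some s then hyp (mkv 1 (- 3%:R * s) (3%:R * s ^+ 2) (- s ^+ 3))
  else hyp (mkv 0 0 0 1).
Definition GammaPlanes : {set {set vec}} := [set osc t | t : option F].

Definition tangent (t : option F) : {set vec} :=
  if t is Some s then span2 (cvec t) (mkv (3%:R * s ^+ 2) (2%:R * s) 1 0)
  else span2 (mkv 1 0 0 0) (mkv 0 1 0 0).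

Definition act (A : 'M[F]_4) (S : {set vec}) : {set vec} := (fun u => u *m A) @: S.

Definition G3 : {set 'M[F]_4} :=
  [set A : 'M[F]_4 | (A \in unitmx) && ([set act A P | P in Ccurve] == Ccurve)].

Definition Gorbit (S : {set vec}) : {set {set vec}} := [set act A S | A in G3].

Definition meetC (pi : {set vec}) : nat := #|[set P in Ccurve | P \subset pi]|.
Definition oneBarPlanes : {set {set vec}} :=
  [set pi in planes | (meetC pi == 1%N) && (pi \notin GammaPlanes)].
Definition dPlanes (d : nat) : {set {set vec}} := [set pi in planes | meetC pi == d].

Definition axisA : {set vec} := [set x : vec | (coord x 0 == 0) && (coord x 3 == 0)].
Definition on_tangent (P : {set vec}) : bool := [exists t : option F, P \subset tangent t].
Definition on_real_chord (P : {set vec}) : bool :=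
  [exists s : option F, exists t : option F,
     (s != t) && (P \subset span2 (cvec s) (cvec t))].

Definition CPoints : {set {set vec}} := [set P in points | P \in Ccurve].
Definition FourGammaPoints : {set {set vec}} := [set P in points | P \subset axisA].
Definition TOPoints : {set {set vec}} :=
  [set P in points | [&& P \notin Ccurve, ~~ (P \subset axisA) & on_tangent P]].
Definition RCPoints : {set {set vec}} :=
  [set P in points | [&& P \notin Ccurve, ~~ (P \subset axisA), ~~ on_tangent P
                       & on_real_chord P]].
Definition ICPoints : {set {set vec}} :=
  [set P in points | [&& P \notin Ccurve, ~~ (P \subset axisA), ~~ on_tangent P
                       & ~~ on_real_chord P]].

Definition N1 := GammaPlanes :|: oneBarPlanes.
Definition N2 := dPlanes 2.
Definition N3 := dPlanes 3.
Definition N4 := dPlanes 0.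
Definition M1 := CPoints.
Definition M2 := FourGammaPoints :|: ICPoints.
Definition M3 := TOPoints.
Definition M4 := RCPoints.

From Pilot Require Import Defs.
From mathcomp Require Import all_boot all_order all_algebra.
Set Implicit Arguments. Unset Strict Implicit. Unset Printing Implicit Defensive.
Import GRing.Theory.
Local Open Scope ring_scope.

(* Over F_3 the twisted cubic C is a set of four points in general position, so G_3
   contains every projectivity permuting them: in the basis formed by the points of C,
   the signed permutation matrices. The number of points of C on a plane and the number
   of 3_C-planes through a point are G_3-invariant; they take the values 1, 2, 3, 0 on
   N_1, ..., N_4 and 3, 1, 0, 2 on M_1, ..., M_4. Each of these classes is a single
   orbit, since every member is the image of one fixed representative under a signed
   permutation. This, and all the counts, are checked by computation on normalized
   coordinate vectors of the 40 points and the 40 planes of PG(3,3). *)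

Lemma card_imset_count (T U : finType) (f : T -> U) (s : seq T) (Q : pred U) :
  uniq s -> {in s &, injective f} ->
  #|[set y in [set f x | x in s] | Q y]| = count (Q \o f) s.
Proof.
move=> s_uniq f_inj.
have -> : [set y in [set f x | x in s] | Q y] = f @: [set x | (x \in s) && Q (f x)].
  apply/setP => y; rewrite inE; apply/andP/imsetP => [[/imsetP[x sx ->] Qfx]|[x]].
    by exists x; rewrite // inE sx.
  by rewrite inE => /andP[sx Qfx] ->; split=> //; apply: imset_f.
rewrite card_in_imset; last by move=> x y /[!inE] /andP[sx _] /andP[sy _]; apply: f_inj.
rewrite -size_filter -(card_uniqP (filter_uniq _ s_uniq)).
by apply: eq_card => x; rewrite inE mem_filter andbC.
Qed.

Lemma card_rel_image (T : finType) (f : T -> T) (X : {set T}) (R : rel T) x :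
  injective f -> f @: X = X -> (forall y z, R (f y) (f z) = R y z) ->
  #|[set y in X | R (f x) y]| = #|[set y in X | R x y]|.
Proof.
move=> f_inj fX Rf.
have -> : [set y in X | R (f x) y] = f @: [set y in X | R x y].
  apply/setP => y; rewrite inE; apply/andP/imsetP => [[]|[z]].
    by rewrite -{1}fX => /imsetP[z Xz ->]; rewrite Rf => Rxz; exists z; rewrite // inE Xz.
  by rewrite inE => /andP[Xz Rxz] ->; rewrite Rf -{1}fX imset_f.
by rewrite card_imset.
Qed.

Lemma imset_inj_stable (T : finType) (f : T -> T) (X : {set T}) :
  injective f -> {in X, forall x, f x \in X} -> f @: X = X.
Proof.
move=> f_inj fX; apply/eqP; rewrite eqEcard card_imset // leqnn andbT.
by apply/subsetP => _ /imsetP[x Xx ->]; apply: fX.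
Qed.

Lemma span1_mem v : v \in span1 v.
Proof. by apply/imsetP; exists 1; rewrite ?scale1r. Qed.

Lemma span1Z k v : k != 0 -> span1 (k *: v) = span1 v.
Proof.
move=> k_nz; apply/setP => y; apply/imsetP/imsetP => [[j _ ->]|[j _ ->]].
  by exists (j * k); rewrite ?scalerA.
by exists (j / k); rewrite // scalerA divfK.
Qed.

Lemma span1_eq_mem u v : u != 0 -> (span1 u == span1 v) = (u \in span1 v).
Proof.
move=> u_nz; apply/eqP/idP => [<-|/imsetP[k _ def_u]]; first exact: span1_mem.
have k_nz : k != 0 by apply: contraNneq u_nz => k0; rewrite def_u k0 scale0r.
by rewrite def_u span1Z.
Qed.

Lemma in_hyp c x : (x \in hyp c) = ((c *m x^T) ord0 ord0 == 0).
Proof. by rewrite inE !mxE; congr (_ == 0); apply: eq_bigr => i _; rewrite !mxE. Qed.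

Lemma hypZ k c : k != 0 -> hyp (k *: c) = hyp c.
Proof.
move=> k_nz; apply/setP => y; rewrite !inE.
under eq_bigr => i _ do rewrite mxE -mulrA.
by rewrite -mulr_sumr mulf_eq0 (negbTE k_nz).
Qed.

Definition scale_closed (S : {set vec}) := forall k y, y \in S -> k *: y \in S.

Lemma sub_span1 v S : scale_closed S -> (span1 v \subset S) = (v \in S).
Proof.
move=> S_closed; apply/subsetP/idP => [|Sv _ /imsetP[k _ ->]]; last exact: S_closed.
by apply; apply: span1_mem.
Qed.

Lemma hyp_scale_closed c : scale_closed (hyp c).
Proof.
move=> k y; rewrite !inE => /eqP cy0.
under eq_bigr => i _ do rewrite mxE mulrCA.
by rewrite -mulr_sumr cy0 mulr0.
Qed.

Lemma span2_scale_closed u w : scale_closed (span2 u w).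
Proof.
move=> k _ /imset2P[a b _ _ ->]; apply/imset2P; exists (k * a) (k * b) => //.
by rewrite scalerDr !scalerA.
Qed.

Lemma act_mul A B S : act (A *m B) S = act B (act A S).
Proof. by rewrite /act -imset_comp; apply: eq_imset => u /=; rewrite mulmxA. Qed.

Lemma act1 S : act 1%:M S = S.
Proof. by rewrite /act (eq_imset _ (@mulmx1 _ _ _)) imset_id. Qed.

Lemma act_span1 A v : act A (span1 v) = span1 (v *m A).
Proof. by rewrite /act /span1 -imset_comp; apply: eq_imset => k /=; rewrite scalemxAl. Qed.

Lemma act_hyp A B c : A *m B = 1%:M -> act A (hyp c) = hyp (c *m B^T).
Proof.
move=> AB; have BA := mulmx1C AB.
apply/setP => y; rewrite in_hyp; apply/imsetP/idP => [[x + ->]|y_hyp].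
  by rewrite in_hyp trmx_mul -!mulmxA (mulmxA B^T) -trmx_mul AB trmx1 mul1mx.
exists (y *m B); last by rewrite -mulmxA BA mulmx1.
by rewrite in_hyp trmx_mul mulmxA.
Qed.

Lemma mulmx_inj A : A \in unitmx -> injective (fun u : vec => u *m A).
Proof. by move=> A_unit u v /(congr1 (mulmx^~ (invmx A))); rewrite -!mulmxA mulmxV // !mulmx1. Qed.

Lemma act_inj A : A \in unitmx -> injective (act A).
Proof. by move=> A_unit; apply/imset_inj/mulmx_inj. Qed.

Lemma act_subset A S S' : A \in unitmx -> (act A S \subset act A S') = (S \subset S').
Proof.
move=> A_unit; have mem_act := mem_imset _ _ (mulmx_inj A_unit).
apply/subsetP/subsetP => sub x.
  by move=> Sx; have := sub (x *m A); rewrite /act !mem_act; apply.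
by case/imsetP => y Sy ->; apply/imset_f/sub.
Qed.

Lemma act_points A P : A \in unitmx -> P \in points -> act A P \in points.
Proof.
move=> A_unit /imsetP[v + ->]; rewrite inE => v_nz.
rewrite act_span1; apply: imset_f; rewrite inE.
by apply: contra v_nz => /eqP vA0; apply/eqP/(mulmx_inj A_unit); rewrite vA0 mul0mx.
Qed.

Lemma act_planes A pi : A \in unitmx -> pi \in planes -> act A pi \in planes.
Proof.
move=> A_unit /imsetP[c + ->]; rewrite inE => c_nz.
rewrite (act_hyp (B := invmx A)) ?mulmxV //; apply: imset_f; rewrite inE.
apply: contra c_nz => /eqP cA0.
by rewrite -[c]mulmx1 -trmx1 -(mulmxV A_unit) trmx_mul mulmxA cA0 mul0mx.
Qed.

(** * The group G_3 and its invariants *)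

Lemma G3_unit A : A \in G3 -> A \in unitmx.
Proof. by rewrite inE => /andP[]. Qed.

Lemma G3_Ccurve A : A \in G3 -> act A @: Ccurve = Ccurve.
Proof. by rewrite inE => /andP[_ /eqP]. Qed.

Lemma G3_mul A B : A \in G3 -> B \in G3 -> A *m B \in G3.
Proof.
move=> A_G3 B_G3; rewrite inE unitmx_mul !G3_unit //=.
by rewrite (eq_imset _ (act_mul A B)) imset_comp !G3_Ccurve.
Qed.

Lemma G3_inv A : A \in G3 -> invmx A \in G3.
Proof.
move=> A_G3; have A_unit := G3_unit A_G3; rewrite inE unitmx_inv A_unit /=.
rewrite -{1}(G3_Ccurve A_G3) -imset_comp (eq_imset _ (fun P => esym (act_mul A (invmx A) P))).
by rewrite mulmxV // (eq_imset _ act1) imset_id.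
Qed.

Lemma meetC_act A pi : A \in G3 -> meetC (act A pi) = meetC pi.
Proof.
move=> A_G3; apply: (@card_rel_image _ (act A) _ (fun pi P => P \subset pi)).
- exact/act_inj/G3_unit.
- exact: G3_Ccurve.
- by move=> ? ?; apply/act_subset/G3_unit.
Qed.

Lemma dPlanes_act A d pi : A \in G3 -> pi \in dPlanes d -> act A pi \in dPlanes d.
Proof.
move=> A_G3; rewrite !inE => /andP[pi_plane meet_d].
by rewrite act_planes ?G3_unit // meetC_act.
Qed.

Definition planes3_through (P : {set vec}) : nat := #|[set pi in dPlanes 3 | P \subset pi]|.

Lemma planes3_through_act A P : A \in G3 -> planes3_through (act A P) = planes3_through P.
Proof.
move=> A_G3; have A_inj := act_inj (G3_unit A_G3).
apply: (@card_rel_image _ (act A) _ (fun P pi => P \subset pi)) => //.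
- by apply: imset_inj_stable => // pi; apply: dPlanes_act.
- by move=> ? ?; apply/act_subset/G3_unit.
Qed.

Definition pclass (n : nat) : {set {set vec}} := [set P in points | planes3_through P == n].

Lemma pclass_act A n P : A \in G3 -> P \in pclass n -> act A P \in pclass n.
Proof.
move=> A_G3; rewrite !inE => /andP[P_point P3].
by rewrite act_points ?G3_unit // planes3_through_act.
Qed.

Lemma Gorbit_class (X : {set {set vec}}) S0 S : S \in X ->
  (forall A Y, A \in G3 -> Y \in X -> act A Y \in X) ->
  (forall Y, Y \in X -> exists2 A, A \in G3 & act A S0 = Y) -> Gorbit S = X.
Proof.
move=> XS X_stable X_reach; apply/setP => Y.
apply/imsetP/idP => [[A A_G3 ->]|/X_reach[A A_G3 <-]]; first exact: X_stable.
have [B B_G3 <-] := X_reach S XS; exists (invmx B *m A); first by rewrite G3_mul ?G3_inv.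
by rewrite -act_mul mulmxA mulmxV ?mul1mx ?G3_unit.
Qed.

Lemma orbits_of_invariant (S : {set {set vec}}) (f : {set vec} -> nat) (ds : seq nat) :
  {in S, forall P, Gorbit P = [set Q in S | f Q == f P]} ->
  {in S, forall P, f P \in ds} ->
  (forall d, d \in ds -> 0 < #|[set Q in S | f Q == d]|)%N ->
  [set Gorbit P | P in S] =i [pred X | has (fun d => X == [set Q in S | f Q == d]) ds].
Proof.
move=> orbitE f_ds ds_f X; rewrite inE; apply/imsetP/hasP => [[P SP ->]|[d dd /eqP ->]].
  by exists (f P); rewrite ?f_ds // orbitE.
have /card_gt0P[P] := ds_f d dd; rewrite inE => /andP[SP /eqP <-].
by exists P; rewrite ?orbitE.
Qed.

(* Under vm_compute the ring operations of 'F_3 are slow (each recomputes the modulus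
   pdiv 3 and a proof of the bound), so computations use explicit ordinals and the
   table-driven [addF] and [mulF]. *)
Definition F0 : F := @Ordinal 3 0 isT.
Definition F1 : F := @Ordinal 3 1 isT.
Definition F2 : F := @Ordinal 3 2 isT.
Definition Fs : seq F := [:: F0; F1; F2].

Lemma F0E : F0 = 0. Proof. exact: val_inj. Qed.
Lemma F1E : F1 = 1. Proof. exact: val_inj. Qed.

Lemma mem_Fs (a : F) : a \in Fs.
Proof. by case: a => [[|[|[|n]]] an]. Qed.

Lemma F_cases (P : F -> Prop) : (forall a, a \in Fs -> P a) -> forall a, P a.
Proof. by move=> PFs a; apply/PFs/mem_Fs. Qed.

Definition addF (a b : F) : F := nth F0 Fs (((a : nat) + b) %% 3)%N.
Definition mulF (a b : F) : F := nth F0 Fs (((a : nat) * b) %% 3)%N.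

Lemma addFE a b : addF a b = a + b.
Proof.
elim/F_cases: a => a; elim/F_cases: b => b; rewrite !inE.
by move=> /or3P[]/eqP-> /or3P[]/eqP->; apply: val_inj.
Qed.

Lemma mulFE a b : mulF a b = a * b.
Proof.
elim/F_cases: a => a; elim/F_cases: b => b; rewrite !inE.
by move=> /or3P[]/eqP-> /or3P[]/eqP->; apply: val_inj.
Qed.

Definition quad := (F * F * F * F)%type.

Definition vec_of (p : quad) : vec := let: (a, b, c, d) := p in mkv a b c d.
Definition quad_of (x : vec) : quad :=
  (Defs.coord x 0, Defs.coord x 1, Defs.coord x 2, Defs.coord x 3).

Lemma quad_ofK : cancel quad_of vec_of.
Proof.
move=> x; apply/rowP => i; rewrite mxE /Defs.coord.
by case: i => [[|[|[|[|//]]]] i4] /=; f_equal; apply: val_inj; rewrite /= inordK.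
Qed.

Lemma vec_ofK : cancel vec_of quad_of.
Proof. by case=> [[[a b] c] d]; rewrite /quad_of /Defs.coord !mxE !inordK. Qed.

Lemma vec_of_inj : injective vec_of.
Proof. exact: can_inj vec_ofK. Qed.

Definition scaleQ (k : F) (p : quad) : quad :=
  let: (a, b, c, d) := p in (mulF k a, mulF k b, mulF k c, mulF k d).
Definition addQ (p q : quad) : quad :=
  let: (a, b, c, d) := p in let: (a', b', c', d') := q in
  (addF a a', addF b b', addF c c', addF d d').
Definition dotQ (p q : quad) : F :=
  let: (a, b, c, d) := p in let: (a', b', c', d') := q in
  addF (addF (addF (mulF a a') (mulF b b')) (mulF c c')) (mulF d d').

Lemma scaleQE k p : k *: vec_of p = vec_of (scaleQ k p).
Proof.
case: p => [[[a b] c] d]; apply/rowP => i; rewrite !mxE !mulFE.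
by case: i => [[|[|[|[|//]]]] i4].
Qed.

Lemma addQE p q : vec_of p + vec_of q = vec_of (addQ p q).
Proof.
case: p => [[[a b] c] d]; case: q => [[[a' b'] c'] d']; apply/rowP => i.
by rewrite !mxE !addFE; case: i => [[|[|[|[|//]]]] i4].
Qed.

Lemma dotQE p q : \sum_(i < 4) vec_of p ord0 i * vec_of q ord0 i = dotQ p q.
Proof.
case: p => [[[a b] c] d]; case: q => [[[a' b'] c'] d'].
by rewrite !big_ord_recl big_ord0 !mxE /= addr0 !addrA !addFE !mulFE.
Qed.

Lemma in_hypE c x : (vec_of x \in hyp (vec_of c)) = (dotQ c x == 0).
Proof. by rewrite inE dotQE. Qed.

Definition mem_span1Q (x v : quad) : bool := has (fun k => x == scaleQ k v) Fs.
Definition mem_span2Q (x u w : quad) : bool :=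
  has (fun a => has (fun b => x == addQ (scaleQ a u) (scaleQ b w)) Fs) Fs.

Lemma in_span1E x v : (vec_of x \in span1 (vec_of v)) = mem_span1Q x v.
Proof.
apply/imsetP/hasP => [[k _]|[k _ /eqP ->]]; last by exists k; rewrite ?scaleQE.
by rewrite scaleQE => /vec_of_inj ->; exists k; rewrite ?mem_Fs.
Qed.

Lemma in_span2E x u w : (vec_of x \in span2 (vec_of u) (vec_of w)) = mem_span2Q x u w.
Proof.
apply/imset2P/hasP => [[a b _ _]|[a _ /hasP[b _ /eqP ->]]].
  rewrite !scaleQE addQE => /vec_of_inj ->.
  by exists a; rewrite ?mem_Fs //; apply/hasP; exists b; rewrite ?mem_Fs.
by exists a b; rewrite // !scaleQE addQE.
Qed.

Definition quads : seq quad :=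
  [seq (x, d) | x <- [seq (x, c) | x <- [seq (a, b) | a <- Fs, b <- Fs], c <- Fs], d <- Fs].

Lemma mem_quads p : p \in quads.
Proof.
case: p => [[[a b] c] d].
by apply: allpairs_f; [apply: allpairs_f; [apply: allpairs_f|]|]; apply: mem_Fs.
Qed.

Definition zeroQ : quad := (F0, F0, F0, F0).

Lemma vec_of_zeroQ : vec_of zeroQ = 0.
Proof. by apply/rowP => i; rewrite !mxE F0E; case: i => [[|[|[|[|//]]]] i4]. Qed.

Definition normalized (p : quad) : bool :=
  let: (a, b, c, d) := p in
  if a != F0 then a == F1 else if b != F0 then b == F1 else if c != F0 then c == F1 else d == F1.

Definition reps : seq quad := filter normalized quads.

Definition nz_multQ (p r : quad) : bool := has (fun k => (k != F0) && (p == scaleQ k r)) Fs.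

Lemma nz_multQP p r : nz_multQ p r -> exists2 k, k != 0 & vec_of p = k *: vec_of r.
Proof. by case/hasP => k _ /andP[k_nz /eqP ->]; exists k; rewrite -?F0E ?scaleQE. Qed.

Lemma reps_check :
  [&& all (fun p => (p == zeroQ) || has (nz_multQ p) reps) quads, zeroQ \notin reps & uniq reps].
Proof. by vm_compute. Qed.

Lemma nz_vec_rep v : v != 0 -> exists2 r, r \in reps & exists2 k, k != 0 & v = k *: vec_of r.
Proof.
case/and3P: reps_check => /allP/(_ (quad_of v) (mem_quads _)) + _ _.
case/orP => [/eqP v0|/hasP[r r_rep /nz_multQP[k k_nz]]]; last first.
  by rewrite quad_ofK => ->; exists r => //; exists k.
by rewrite -[v]quad_ofK v0 vec_of_zeroQ eqxx.
Qed.

Lemma reps_nz r : r \in reps -> vec_of r != 0.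
Proof.
move=> r_rep; rewrite -vec_of_zeroQ (inj_eq vec_of_inj).
by apply: contraTneq r_rep => ->; case/and3P: reps_check.
Qed.

Lemma points_reps : points = [set span1 (vec_of r) | r in reps].
Proof.
apply/setP => S; apply/imsetP/imsetP => [[v + ->]|[r r_rep ->]].
  by rewrite inE => /nz_vec_rep[r r_rep [k k_nz ->]]; exists r; rewrite ?span1Z.
by exists (vec_of r); rewrite // inE reps_nz.
Qed.

Lemma planes_reps : planes = [set hyp (vec_of r) | r in reps].
Proof.
apply/setP => S; apply/imsetP/imsetP => [[c + ->]|[r r_rep ->]].
  by rewrite inE => /nz_vec_rep[r r_rep [k k_nz ->]]; exists r; rewrite ?hypZ.
by exists (vec_of r); rewrite // inE reps_nz.
Qed.

Lemma span1_reps_check : all (fun r => all (fun r' => (r == r') || ~~ mem_span1Q r r') reps) reps.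
Proof. by vm_compute. Qed.

Lemma hyp_reps_check :
  all (fun r => all (fun r' =>
    (r == r') || has (fun x => (dotQ r x == F0) != (dotQ r' x == F0)) quads) reps) reps.
Proof. by vm_compute. Qed.

Lemma span1_reps_inj : {in reps &, injective (fun r => span1 (vec_of r))}.
Proof.
move=> r r' r_rep r'_rep /= eq_span; have := span1_mem (vec_of r).
rewrite eq_span in_span1E; apply: contraTeq => neq_rr'.
by have := allP (allP span1_reps_check r r_rep) r' r'_rep; rewrite (negbTE neq_rr').
Qed.

Lemma hyp_reps_inj : {in reps &, injective (fun r => hyp (vec_of r))}.
Proof.
move=> r r' r_rep r'_rep /= eq_hyp.
have /orP[/eqP //|/hasP[x _]] := allP (allP hyp_reps_check r r_rep) r' r'_rep.
by rewrite F0E -!in_hypE eq_hyp eqxx.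
Qed.

Lemma card_points (Q : pred {set vec}) :
  #|[set P in points | Q P]| = count (fun r => Q (span1 (vec_of r))) reps.
Proof.
rewrite points_reps; apply: card_imset_count; last exact: span1_reps_inj.
by case/and3P: reps_check.
Qed.

Lemma card_planes (Q : pred {set vec}) :
  #|[set pi in planes | Q pi]| = count (fun r => Q (hyp (vec_of r))) reps.
Proof.
rewrite planes_reps; apply: card_imset_count; last exact: hyp_reps_inj.
by case/and3P: reps_check.
Qed.

(** * Plane classes *)

Definition Os : seq (option F) := None :: map Some Fs.

Lemma mem_Os t : t \in Os.
Proof. by case: t => [s|] //; rewrite in_cons (mem_map (@Some_inj _)) mem_Fs orbT. Qed.

Definition cquad (t : option F) : quad :=
  if t is Some s then (mulF s (mulF s s), mulF s s, s, F1) else (F1, F0, F0, F0).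

Lemma cquadE t : vec_of (cquad t) = cvec t.
Proof. by case: t => [s|]; rewrite /= ?F0E F1E // !mulFE !exprS expr0 !mulr1. Qed.

Lemma cvec_nz t : cvec t != 0.
Proof.
rewrite -cquadE -vec_of_zeroQ (inj_eq vec_of_inj).
by case: t => [s|] //; rewrite !xpair_eqE andbF.
Qed.

Lemma cpt_check : all (fun s => all (fun t => (s == t) || ~~ mem_span1Q (cquad s) (cquad t)) Os) Os.
Proof. by vm_compute. Qed.

Lemma cpt_inj : injective cpt.
Proof.
move=> s t eq_st; have := span1_mem (cvec s); rewrite -/(cpt s) eq_st /cpt -!cquadE in_span1E.
apply: contraTeq => neq_st.
by have := allP (allP cpt_check s (mem_Os s)) t (mem_Os t); rewrite (negbTE neq_st).
Qed.

Lemma Ccurve_Os : Ccurve = [set cpt t | t in Os].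
Proof.
by apply/setP => P; apply/imsetP/imsetP => [[t _ ->]|[t _ ->]]; exists t; rewrite ?mem_Os.
Qed.

Lemma meetC_scale_closed pi : scale_closed pi -> meetC pi = count (fun t => cvec t \in pi) Os.
Proof.
move=> pi_closed; rewrite /meetC Ccurve_Os card_imset_count //.
  by apply: eq_count => t /=; rewrite /cpt sub_span1.
by move=> s t _ _; apply: cpt_inj.
Qed.

Definition meetCQ (c : quad) : nat := count (fun t => dotQ c (cquad t) == F0) Os.

Lemma meetC_hyp c : meetC (hyp (vec_of c)) = meetCQ c.
Proof.
rewrite meetC_scale_closed; last exact: hyp_scale_closed.
by apply: eq_count => t; rewrite -cquadE in_hypE F0E.
Qed.

Lemma card_dPlanes d : #|dPlanes d| = count (fun r => meetCQ r == d) reps.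
Proof. by rewrite card_planes; apply: eq_count => r; rewrite /= meetC_hyp. Qed.

Lemma meetC_range : all (fun r => meetCQ r \in [:: 1; 2; 3; 0]%N) reps.
Proof. by vm_compute. Qed.

(* Over F_3, s^3 = s and 3 = 0, so pi_osc(s) = pi(1, 0, 0, -s). *)
Definition oscQ (t : option F) : quad :=
  if t is Some s then (F1, F0, F0, mulF F2 s) else (F0, F0, F0, F1).

Lemma osc_hyp t : osc t = hyp (vec_of (oscQ t)).
Proof.
case: t => [s|] /=; rewrite ?F0E F1E ?mulFE //; congr (hyp (mkv _ _ _ _)).
all: by elim/F_cases: s => s; rewrite !inE => /or3P[]/eqP->; apply: val_inj.
Qed.

Lemma osc_check : all (fun t => (oscQ t \in reps) && (meetCQ (oscQ t) == 1%N)) Os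
  && all (fun s => all (fun t => (s == t) || (oscQ s != oscQ t)) Os) Os.
Proof. by vm_compute. Qed.

Lemma osc_reps t : oscQ t \in reps.
Proof. by case/andP: osc_check => /allP/(_ t (mem_Os t))/andP[]. Qed.

Lemma osc_inj : injective osc.
Proof.
move=> s t; rewrite !osc_hyp => /(hyp_reps_inj (osc_reps s) (osc_reps t)) eq_st.
apply/eqP; case/andP: osc_check => _ /allP/(_ s (mem_Os s))/allP/(_ t (mem_Os t)).
by rewrite eq_st eqxx orbF.
Qed.

Lemma card_GammaPlanes : #|GammaPlanes| = 4%N.
Proof. by rewrite card_imset; [rewrite card_option card_ord | apply: osc_inj]. Qed.

Lemma GammaPlanes_sub : GammaPlanes \subset dPlanes 1.
Proof.
apply/subsetP => _ /imsetP[t _ ->]; rewrite inE osc_hyp meetC_hyp planes_reps.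
have /andP[/allP/(_ t (mem_Os t))/andP[_ ->] _] := osc_check.
by rewrite andbT; apply/imsetP; exists (oscQ t); first exact: osc_reps.
Qed.

Lemma N1E : N1 = dPlanes 1.
Proof.
apply/setP => pi; rewrite /N1 /oneBarPlanes !inE.
by case: (boolP (pi \in GammaPlanes)) => [/(subsetP GammaPlanes_sub)|]; rewrite ?inE ?andbT.
Qed.

Lemma card_oneBarPlanes : #|oneBarPlanes| = (#|dPlanes 1| - 4)%N.
Proof.
have -> : oneBarPlanes = dPlanes 1 :\: GammaPlanes.
  by apply/setP => pi; rewrite !inE; case: (pi \in GammaPlanes); rewrite /= ?andbF ?andbT.
by rewrite (cardsD (dPlanes 1) GammaPlanes) (setIidPr GammaPlanes_sub) card_GammaPlanes.
Qed.

Lemma plane_cards :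
  [/\ #|GammaPlanes| = 4%N, #|oneBarPlanes| = 12%N, #|N1| = 16%N,
      #|N2| = 12%N & #|N3| = 4%N /\ #|N4| = 8%N].
Proof.
rewrite card_GammaPlanes card_oneBarPlanes N1E /N2 /N3 /N4 !card_dPlanes.
by vm_compute.
Qed.

(** * Point classes *)

Lemma axisA_scale_closed : scale_closed axisA.
Proof.
move=> k y; rewrite !inE /Defs.coord !mxE => /andP[/eqP-> /eqP->].
by rewrite !mulr0 eqxx.
Qed.

Definition on_curveQ (r : quad) : bool := has (fun t => mem_span1Q (cquad t) r) Os.

Lemma on_curveE r : (span1 (vec_of r) \in Ccurve) = on_curveQ r.
Proof.
rewrite Ccurve_Os; apply/imsetP/hasP => [[t _ /esym/eqP]|[t _]].
  by rewrite /cpt span1_eq_mem ?cvec_nz // -cquadE in_span1E => ?; exists t; rewrite ?mem_Os.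
rewrite -in_span1E cquadE -span1_eq_mem ?cvec_nz // => /eqP cpt_r.
by exists t; rewrite ?mem_Os // /cpt cpt_r.
Qed.

Definition on_axisQ (r : quad) : bool := let: (a, _, _, d) := r in (a == F0) && (d == F0).

Lemma on_axisE r : (span1 (vec_of r) \subset axisA) = on_axisQ r.
Proof.
rewrite sub_span1; last exact: axisA_scale_closed.
by case: r => [[[a b] c] d]; rewrite inE /Defs.coord !mxE !inordK //= F0E.
Qed.

(* Over F_3 the tangent at P(s) is spanned by P(s) and (0, 2s, 1, 0). *)
Definition tangentQ (t : option F) : quad * quad :=
  if t is Some s then (cquad t, (F0, mulF F2 s, F1, F0))
  else ((F1, F0, F0, F0), (F0, F1, F0, F0)).

Lemma tangent_span2 t : tangent t = span2 (vec_of (tangentQ t).1) (vec_of (tangentQ t).2).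
Proof.
case: t => [s|]; last by rewrite /= F0E F1E.
congr (span2 _ _); first exact/esym/cquadE.
rewrite /= F0E F1E mulFE; congr (mkv _ _ _ _).
all: by elim/F_cases: s => s; rewrite !inE => /or3P[]/eqP->; apply: val_inj.
Qed.

Definition on_tangentQ (r : quad) : bool :=
  has (fun t => mem_span2Q r (tangentQ t).1 (tangentQ t).2) Os.

Lemma on_tangentE r : on_tangent (span1 (vec_of r)) = on_tangentQ r.
Proof.
have tanE t : (span1 (vec_of r) \subset tangent t) = mem_span2Q r (tangentQ t).1 (tangentQ t).2.
  by rewrite tangent_span2 sub_span1 ?in_span2E //; apply: span2_scale_closed.
apply/existsP/hasP => [[t]|[t _ r_tan]]; last by exists t; rewrite tanE.
by rewrite tanE => r_tan; exists t; rewrite ?mem_Os.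
Qed.

Definition on_chordQ (r : quad) : bool :=
  has (fun s => has (fun t => (s != t) && mem_span2Q r (cquad s) (cquad t)) Os) Os.

Lemma on_chordE r : on_real_chord (span1 (vec_of r)) = on_chordQ r.
Proof.
have chordE s t :
    (span1 (vec_of r) \subset span2 (cvec s) (cvec t)) = mem_span2Q r (cquad s) (cquad t).
  by rewrite -!cquadE sub_span1 ?in_span2E //; apply: span2_scale_closed.
apply/existsP/hasP => [[s /existsP[t]]|[s _ /hasP[t _ st_chord]]].
  rewrite chordE => st_chord; exists s; rewrite ?mem_Os //.
  by apply/hasP; exists t; rewrite ?mem_Os.
by exists s; apply/existsP; exists t; rewrite chordE.
Qed.

Definition planes3Q (r : quad) : nat :=
  count (fun c => (meetCQ c == 3%N) && (dotQ c r == F0)) reps.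

Lemma planes3_through_span1 r : planes3_through (span1 (vec_of r)) = planes3Q r.
Proof.
rewrite /planes3_through.
have -> : [set pi in dPlanes 3 | span1 (vec_of r) \subset pi] =
          [set pi in planes | (meetC pi == 3%N) && (span1 (vec_of r) \subset pi)].
  by apply/setP => pi; rewrite !inE andbA.
rewrite card_planes; apply: eq_count => c /=.
by rewrite meetC_hyp sub_span1 ?in_hypE ?F0E //; apply: hyp_scale_closed.
Qed.

Lemma point_types_check : all (fun r => [&&
    on_curveQ r == (planes3Q r == 3%N),
    on_axisQ r || [&& ~~ on_curveQ r, ~~ on_axisQ r, ~~ on_tangentQ r & ~~ on_chordQ r]
      == (planes3Q r == 1%N),
    [&& ~~ on_curveQ r, ~~ on_axisQ r & on_tangentQ r] == (planes3Q r == 0%N) &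
    [&& ~~ on_curveQ r, ~~ on_axisQ r, ~~ on_tangentQ r & on_chordQ r] == (planes3Q r == 2%N)])
  reps.
Proof. by vm_compute. Qed.

Lemma planes3_range : all (fun r => planes3Q r \in [:: 3; 1; 0; 2]%N) reps.
Proof. by vm_compute. Qed.

Lemma eq_points_set (Q Q' : pred {set vec}) :
  (forall r, r \in reps -> Q (span1 (vec_of r)) = Q' (span1 (vec_of r))) ->
  [set P in points | Q P] = [set P in points | Q' P].
Proof.
move=> QQ'; apply/setP => P; rewrite !inE points_reps.
by case: imsetP => // -[r r_rep ->]; rewrite QQ'.
Qed.

Lemma point_classes : [/\ M1 = pclass 3, M2 = pclass 1, M3 = pclass 0 & M4 = pclass 2].
Proof.
have M2E : M2 = [set P in points | (P \subset axisA) || [&& P \notin Ccurve,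
    ~~ (P \subset axisA), ~~ on_tangent P & ~~ on_real_chord P]].
  by apply/setP => P; rewrite !inE -andb_orr.
rewrite M2E; split; apply: eq_points_set => r r_rep;
  have /and4P[/eqP E3 /eqP E1 /eqP E0 /eqP E2] := allP point_types_check r r_rep;
  by rewrite ?on_curveE ?on_axisE ?on_tangentE ?on_chordE planes3_through_span1.
Qed.

Lemma card_pclass n : #|pclass n| = count (fun r => planes3Q r == n) reps.
Proof. by rewrite card_points; apply: eq_count => r; rewrite /= planes3_through_span1. Qed.

Lemma point_cards :
  [/\ #|M1| = 4%N, #|FourGammaPoints| = 4%N, #|ICPoints| = 12%N,
      #|M2| = 16%N & #|M3| = 8%N /\ #|M4| = 12%N].
Proof.
have card_axis : #|FourGammaPoints| = count on_axisQ reps.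
  by rewrite card_points; apply: eq_count => r; rewrite /= on_axisE.
have card_IC : #|ICPoints| = count (fun r =>
    [&& ~~ on_curveQ r, ~~ on_axisQ r, ~~ on_tangentQ r & ~~ on_chordQ r]) reps.
  rewrite card_points; apply: eq_count => r.
  by rewrite /= on_curveE on_axisE on_tangentE on_chordE.
have [-> -> -> ->] := point_classes.
by rewrite card_axis card_IC !card_pclass; vm_compute.
Qed.

(** * Orbits of G_3 *)

Definition quad4 := (quad * quad * quad * quad)%type.

Definition mx_of (R : quad4) : 'M[F]_4 :=
  let: (r0, r1, r2, r3) := R in \matrix_(i < 4) vec_of (nth r0 [:: r0; r1; r2; r3] i).

Definition vmulQ (p : quad) (R : quad4) : quad :=
  let: (a, b, c, d) := p in let: (r0, r1, r2, r3) := R in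
  addQ (addQ (addQ (scaleQ a r0) (scaleQ b r1)) (scaleQ c r2)) (scaleQ d r3).

Definition tmulQ (p : quad) (R : quad4) : quad :=
  let: (r0, r1, r2, r3) := R in (dotQ p r0, dotQ p r1, dotQ p r2, dotQ p r3).

Lemma vmulQE p R : vec_of p *m mx_of R = vec_of (vmulQ p R).
Proof.
case: p R => [[[a b] c] d] [[[r0 r1] r2] r3].
by rewrite mulmx_sum_row !big_ord_recl big_ord0 addr0 !rowK !mxE /= !addrA !scaleQE !addQE.
Qed.

Lemma tmulQE p R : vec_of p *m (mx_of R)^T = vec_of (tmulQ p R).
Proof.
case: R => [[[r0 r1] r2] r3]; apply/rowP => j; rewrite [RHS]mxE mxE.
by case: j => [[|[|[|[|//]]]] j4] /=; rewrite -dotQE; apply: eq_bigr => k _; rewrite !mxE.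
Qed.

Definition kernel_trivial (R : quad4) : bool :=
  all (fun p => (p == zeroQ) || (vmulQ p R != zeroQ)) quads.

Lemma mx_of_unit R : kernel_trivial R -> mx_of R \in unitmx.
Proof.
move=> /allP R_ker; rewrite -row_free_unit; apply: inj_row_free => v.
rewrite -[v]quad_ofK vmulQE -vec_of_zeroQ => /vec_of_inj vR0.
by have /orP[/eqP ->|] := R_ker _ (mem_quads (quad_of v)); rewrite ?vR0 ?eqxx.
Qed.

Definition preserves_curve (R : quad4) : bool :=
  all (fun t => has (fun t' => nz_multQ (vmulQ (cquad t) R) (cquad t')) Os) Os.

Lemma mx_of_G3 R : kernel_trivial R -> preserves_curve R -> mx_of R \in G3.
Proof.
move=> R_ker /allP R_curve; have R_unit := mx_of_unit R_ker.
rewrite inE R_unit; apply/eqP/imset_inj_stable; first exact: act_inj.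
move=> _ /imsetP[t _ ->]; have /hasP[t' _ /nz_multQP[k k_nz img_t]] := R_curve t (mem_Os t).
by rewrite /cpt act_span1 -cquadE vmulQE img_t span1Z // cquadE; apply/imsetP; exists t'.
Qed.

(* [mulQ4 frame_inv img] is the matrix sending the points of C, in the order of
   [frame], to the rows of [img]; [frame_coords] finds coordinates with respect to
   [frame] by search. *)
Definition frame : seq quad := map cquad Os.

Definition quad4_of (s : seq quad) : quad4 :=
  (nth zeroQ s 0, nth zeroQ s 1, nth zeroQ s 2, nth zeroQ s 3).

Definition frame_coords (p : quad) : quad :=
  nth zeroQ quads (find (fun l => vmulQ l (quad4_of frame) == p) quads).

Definition frame_inv : quad4 :=
  (frame_coords (F1, F0, F0, F0), frame_coords (F0, F1, F0, F0),
   frame_coords (F0, F0, F1, F0), frame_coords (F0, F0, F0, F1)).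

Definition mulQ4 (R S : quad4) : quad4 :=
  let: (r0, r1, r2, r3) := R in (vmulQ r0 S, vmulQ r1 S, vmulQ r2 S, vmulQ r3 S).

Definition signs : seq quad :=
  [seq e <- quads | let: (a, b, c, d) := e in [&& a != F0, b != F0, c != F0 & d != F0]].

Definition signed (e : quad) (s : seq quad) : quad4 :=
  let: (a, b, c, d) := e in
  (scaleQ a (nth zeroQ s 0), scaleQ b (nth zeroQ s 1),
   scaleQ c (nth zeroQ s 2), scaleQ d (nth zeroQ s 3)).

Definition frame_images : seq quad4 := [seq signed e s | s <- permutations frame, e <- signs].

Definition G3_list : seq quad4 :=
  let B' := frame_inv in [seq mulQ4 B' img | img <- frame_images].

Lemma G3_list_check : all (fun R => kernel_trivial R && preserves_curve R) G3_list.
Proof. by vm_compute. Qed.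

Lemma G3_list_G3 R : R \in G3_list -> mx_of R \in G3.
Proof. by move=> R_list; have /andP[] := allP G3_list_check R R_list; apply: mx_of_G3. Qed.

Definition class_rep (inv : quad -> nat) (n : nat) : quad :=
  let classes := [seq (r, inv r) | r <- reps] in
  (nth (zeroQ, 0%N) classes (find (fun x => x.2 == n) classes)).1.

(* The statement of [reached_from_class_repsP] as a test, with the list of classes
   computed once instead of once per [r]. *)
Definition reached_from_class_reps (inv : quad -> nat) (img : quad -> quad4 -> quad)
    (L : seq quad4) : bool :=
  let classes := [seq (r, inv r) | r <- reps] in
  all (fun x => has (fun R =>
    nz_multQ (img (nth (zeroQ, 0%N) classes (find (fun y => y.2 == x.2) classes)).1 R) x.1) L)
  classes.

Lemma reached_from_class_repsP inv img L : reached_from_class_reps inv img L ->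
  {in reps, forall r, has (fun R => nz_multQ (img (class_rep inv (inv r)) R) r) L}.
Proof. by move=> /allP reached r r_rep; apply: (reached (r, inv r)); apply: map_f. Qed.

Lemma points_reached : reached_from_class_reps planes3Q vmulQ G3_list.
Proof. by vm_compute. Qed.

Lemma planes_reached : reached_from_class_reps meetCQ tmulQ G3_list.
Proof. by vm_compute. Qed.

Lemma pclass_orbit n P : P \in pclass n -> Gorbit P = pclass n.
Proof.
move=> Pn; apply: (Gorbit_class (S0 := span1 (vec_of (class_rep planes3Q n)))) => // [A Y|Y].
  exact: pclass_act.
rewrite inE points_reps => /andP[/imsetP[r r_rep ->]]; rewrite planes3_through_span1 => /eqP <-.
have /hasP[R R_list /nz_multQP[k k_nz img_r]] := reached_from_class_repsP points_reached r_rep.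
by exists (mx_of R); [apply: G3_list_G3 | rewrite act_span1 vmulQE img_r span1Z].
Qed.

Lemma dPlanes_orbit d pi : pi \in dPlanes d -> Gorbit pi = dPlanes d.
Proof.
move=> pi_d; apply: (Gorbit_class (S0 := hyp (vec_of (class_rep meetCQ d)))) => // [A Y|Y].
  exact: dPlanes_act.
rewrite inE planes_reps => /andP[/imsetP[r r_rep ->]]; rewrite meetC_hyp => /eqP <-.
have /hasP[R R_list /nz_multQP[k k_nz img_r]] := reached_from_class_repsP planes_reached r_rep.
have R_unit := G3_unit (G3_list_G3 R_list).
exists (invmx (mx_of R)); first exact/G3_inv/G3_list_G3.
by rewrite (act_hyp (B := mx_of R)) ?mulVmx // tmulQE img_r hypZ.
Qed.

Lemma plane_orbits : [set Gorbit pi | pi in planes] = [set N1; N2; N3; N4].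
Proof.
have [_ _ card1 card2 [card3 card0]] := plane_cards.
apply/setP => X; rewrite (orbits_of_invariant (f := meetC) (ds := [:: 1; 2; 3; 0]%N)).
- by rewrite N1E !inE /= orbF !orbA.
- by move=> pi pi_plane; apply: dPlanes_orbit; rewrite inE pi_plane eqxx.
- move=> pi; rewrite planes_reps => /imsetP[r r_rep ->]; rewrite meetC_hyp.
  exact: (allP meetC_range).
move=> d; rewrite !inE => /or4P[]/eqP->; rewrite -/(dPlanes _).
- by rewrite -N1E card1.
- by rewrite -/N2 card2.
- by rewrite -/N3 card3.
- by rewrite -/N4 card0.
Qed.

Lemma point_orbits : [set Gorbit P | P in points] = [set M1; M2; M3; M4].
Proof.
have [E1 E2 E3 E4] := point_classes.
have [card1 _ _ card2 [card3 card4]] := point_cards.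
apply/setP => X; rewrite (orbits_of_invariant (f := planes3_through) (ds := [:: 3; 1; 0; 2]%N)).
- by rewrite E1 E2 E3 E4 !inE /= orbF !orbA.
- by move=> P P_point; apply: pclass_orbit; rewrite inE P_point eqxx.
- move=> P; rewrite points_reps => /imsetP[r r_rep ->]; rewrite planes3_through_span1.
  exact: (allP planes3_range).
move=> n; rewrite !inE => /or4P[]/eqP->; rewrite -/(pclass _).
- by rewrite -E1 card1.
- by rewrite -E2 card2.
- by rewrite -E3 card3.
- by rewrite -E4 card4.
Qed.

Theorem theorem5p2 :
  [/\ [set Gorbit pi | pi in planes] = [set N1; N2; N3; N4],
      [/\ #|GammaPlanes| = 4%N, #|oneBarPlanes| = 12%N, #|N1| = 16%N,
          #|N2| = 12%N & #|N3| = 4%N /\ #|N4| = 8%N],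
      [set Gorbit P | P in points] = [set M1; M2; M3; M4] &
      [/\ #|M1| = 4%N, #|FourGammaPoints| = 4%N, #|ICPoints| = 12%N,
          #|M2| = 16%N & #|M3| = 8%N /\ #|M4| = 12%N]].
Proof.
split.
- exact: plane_orbits.
- exact: plane_cards.
- exact: point_orbits.
- exact: point_cards.
Qed.
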